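(* Let $K>1$ and define the asymmetric softmax $\tilde{\bm{\psi}}:\mathbb{R}^{K+1}\to\mathbb{R}^{K+1}$ by $$\tilde{\psi}_y(\bm{u})=\frac{\exp(u_y)}{\sum_{y'=1}^{K}\exp(u_{y'})}\ \ (1\le y\le K),\qquad \tilde{\psi}_{K+1}(\bm{u})=\frac{\exp(u_{K+1})}{\sum_{y'=1}^{K+1}\exp(u_{y'})-\max_{y'\in\{1,\dots,K\}}\exp(u_{y'})}.$$ Then for every $\bm{u}\in\mathbb{R}^{K+1}$: (i) $\tilde{\bm{\psi}}(\bm{u})\in\Delta^K\times[0,1]$; (ii) $\mathop{\rm argmax}_{y\in\{1,\dots,K+1\}}\tilde{\psi}_y(\bm{u})=\mathop{\rm argmax}_{y\in\{1,\dots,K+1\}}u_y$.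
   Context: $\Delta^K$ denotes the probability simplex $\{\bm{p}\in\mathbb{R}^K:p_y\ge0,\ \sum_y p_y=1\}$; $\Delta^K\times[0,1]$ means the first $K$ coordinates lie in $\Delta^K$ and the last in $[0,1]$. *)

From HB Require Import structures.
From mathcomp Require Import all_boot all_order all_algebra.
From mathcomp Require Import all_classical all_reals all_analysis.
Set Implicit Arguments. Unset Strict Implicit. Unset Printing Implicit Defensive.
Import Order.TTheory GRing.Theory Num.Theory.
Local Open Scope ring_scope.

(* Coordinates 1..K+1 of the paper are the ordinals 0..K of 'I_K.+1;
   paper's class K+1 is ord_max (value K). *)

(* max_{y' in {1..K}} exp(u_{y'}); exps are positive, so 0 is a neutral
   starting value and this is the genuine maximum (K >= 1 terms). *)
Definition maxexpK (R : realType) (K : nat) (u : 'I_K.+1 -> R) : R :=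
  \big[Num.max/0]_(i < K.+1 | (i < K)%N) expR (u i).

Definition asym_softmax (R : realType) (K : nat) (u : 'I_K.+1 -> R)
  (y : 'I_K.+1) : R :=
  if (y < K)%N then
    expR (u y) / (\sum_(i < K.+1 | (i < K)%N) expR (u i))
  else
    expR (u y) / ((\sum_(i < K.+1) expR (u i)) - maxexpK u).

Definition argmax_set (R : realType) (n : nat) (f : 'I_n -> R) : set 'I_n :=
  [set y | forall z, f z <= f y].

Definition in_simplex_x_unit (R : realType) (K : nat) (p : 'I_K.+1 -> R) : Prop :=
  (forall y : 'I_K.+1, (y < K)%N -> 0 <= p y) /\
  (\sum_(y < K.+1 | (y < K)%N) p y = 1) /\
  (0 <= p ord_max /\ p ord_max <= 1).

From HB Require Import structures.
From mathcomp Require Import all_boot all_order all_algebra.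
From mathcomp Require Import all_classical all_reals all_analysis.
From mathcomp Require Import ring.
Set Implicit Arguments.
Unset Strict Implicit.
Unset Printing Implicit Defensive.

Import Order.TTheory GRing.Theory Num.Theory.
Local Open Scope ring_scope.
Local Open Scope classical_set_scope.

(* Write e_y = exp u_y, S = e_1 + ... + e_K and M = max_{y <= K} e_y.  The
   first K coordinates are e_y / S, a probability vector ordered like u, with
   largest value M / S.  The last coordinate is E / (S + E - M) with
   E = e_{K+1}, and
     E / (S + E - M) - M / S = (E - M) (S - M) / (S (S + E - M)),
   where S - M > 0 because K > 1.  So the last coordinate compares with the
   best of the first K exactly as E compares with M, which is all the argmax
   sees; and S - M > 0 also bounds the last coordinate by 1. *)

Lemma ord_max_of_geq n (i : 'I_n.+1) : ~~ (i < n)%N -> i = ord_max.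
Proof.
rewrite -leqNgt => ge_in; apply/val_inj/eqP.
by rewrite eqn_leq ge_in andbT -ltnS ltn_ord.
Qed.

Lemma sumr_ord_max (V : nmodType) n (F : 'I_n.+1 -> V) :
  \sum_(i < n.+1) F i = \sum_(i < n.+1 | (i < n)%N) F i + F ord_max.
Proof.
rewrite (bigID (fun i : 'I_n.+1 => (i < n)%N)) /=; congr (_ + _).
apply: big_pred1 => i /=; apply/idP/eqP => [|->]; first exact: ord_max_of_geq.
by rewrite ltnn.
Qed.

Lemma exists_other_ord n (j : 'I_n.+1) : (1 < n)%N ->
  exists2 k : 'I_n.+1, (k < n)%N & k != j.
Proof.
move=> n_gt1; have n_gt0 := ltnW n_gt1.
have [->|ne_j0] := eqVneq j (inord 0).
  exists (inord 1); first by rewrite inordK // ltnW.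
  by apply/eqP => /(congr1 val); rewrite /= !inordK // ltnW.
by exists (inord 0); rewrite 1?eq_sym // inordK.
Qed.

Lemma ltr_sum_term (R : numDomainType) (I : finType) (P : pred I)
    (F : I -> R) (j k : I) :
  (forall i, P i -> 0 <= F i) -> P j -> P k -> k != j -> 0 < F k ->
  F j < \sum_(i | P i) F i.
Proof.
move=> F_ge0 Pj Pk neq_kj Fk_gt0.
rewrite (bigD1 j) //= ltrDl (bigD1 k) /=; last by rewrite Pk.
apply: ltr_pwDl Fk_gt0 _; apply: sumr_ge0 => i /andP[/andP[Pi _] _].
exact: F_ge0.
Qed.

Section ShiftedRatio.
Context {R : realFieldType} {E M S : R}.
Hypotheses (E_ge0 : 0 <= E) (S_gt0 : 0 < S) (M_lt_S : M < S).

Let D_gt0 : 0 < S + E - M.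
Proof. by rewrite addrAC ltr_wpDr // subr_gt0. Qed.

Let factor_gt0 : 0 < (S - M) / (S * (S + E - M)).
Proof. by apply: divr_gt0; rewrite ?subr_gt0 // mulr_gt0. Qed.

Lemma shifted_ratio_subE :
  E / (S + E - M) - M / S = (E - M) * ((S - M) / (S * (S + E - M))).
Proof. by field; rewrite !gt_eqF. Qed.

Lemma ler_shifted_ratio : (E / (S + E - M) <= M / S) = (E <= M).
Proof. by rewrite -subr_le0 shifted_ratio_subE pmulr_lle0 // subr_le0. Qed.

Lemma ger_shifted_ratio : (M / S <= E / (S + E - M)) = (M <= E).
Proof. by rewrite -subr_ge0 shifted_ratio_subE pmulr_lge0 // subr_ge0. Qed.

Lemma shifted_ratio_ge0 : 0 <= E / (S + E - M).
Proof. by rewrite divr_ge0 // ltW. Qed.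

Lemma shifted_ratio_le1 : E / (S + E - M) <= 1.
Proof. by rewrite ler_pdivrMr // mul1r addrAC lerDr subr_ge0 ltW. Qed.

End ShiftedRatio.

Section ArgmaxLast.
Context {R : realType} {n : nat} {f g : 'I_n.+1 -> R} {j : 'I_n.+1}.
Hypothesis jn : (j < n)%N.
Hypothesis fj_max : forall z : 'I_n.+1, (z < n)%N -> f z <= f j.
Hypothesis fg_init : forall y z : 'I_n.+1, (y < n)%N -> (z < n)%N ->
  (f z <= f y) = (g z <= g y).
Hypothesis fg_last_le : (f ord_max <= f j) = (g ord_max <= g j).
Hypothesis fg_last_ge : (f j <= f ord_max) = (g j <= g ord_max).

Lemma sub_argmax_set_last : argmax_set f `<=` argmax_set g.
Proof.
have gj_max (z : 'I_n.+1) : (z < n)%N -> g z <= g j.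
  by move=> zn; rewrite -fg_init ?fj_max.
move=> y; have [yn|/ord_max_of_geq->] := boolP (y < n)%N => /= fy_max z.
  have gjy : g j <= g y by rewrite -fg_init ?fy_max.
  have [zn|/ord_max_of_geq->] := boolP (z < n)%N.
    by rewrite -fg_init ?fy_max.
  have fyj : f y = f j by apply/le_anti; rewrite fj_max ?fy_max.
  by apply: le_trans gjy; rewrite -fg_last_le -fyj fy_max.
have gj_last : g j <= g ord_max by rewrite -fg_last_ge fy_max.
have [zn|/ord_max_of_geq->//] := boolP (z < n)%N.
exact: le_trans (gj_max z zn) gj_last.
Qed.

End ArgmaxLast.

Lemma eq_argmax_set_last (R : realType) n (f g : 'I_n.+1 -> R) (j : 'I_n.+1) :
  (j < n)%N -> (forall z : 'I_n.+1, (z < n)%N -> f z <= f j) ->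
  (forall y z : 'I_n.+1, (y < n)%N -> (z < n)%N ->
     (f z <= f y) = (g z <= g y)) ->
  (f ord_max <= f j) = (g ord_max <= g j) ->
  (f j <= f ord_max) = (g j <= g ord_max) ->
  argmax_set f = argmax_set g.
Proof.
move=> jn fj_max fg_init fg_last_le fg_last_ge.
have gj_max (z : 'I_n.+1) : (z < n)%N -> g z <= g j.
  by move=> zn; rewrite -fg_init ?fj_max.
apply/seteqP; split.
  exact: (sub_argmax_set_last jn fj_max fg_init fg_last_le fg_last_ge).
apply: (sub_argmax_set_last jn gj_max).
- by move=> y z yn zn; rewrite fg_init.
- by rewrite fg_last_le.
- by rewrite fg_last_ge.
Qed.

Section AsymSoftmax.
Variables (R : realType) (K : nat) (u : 'I_K.+1 -> R).
Hypothesis K_gt1 : (1 < K)%N.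

Let S := \sum_(i < K.+1 | (i < K)%N) expR (u i).
Let M := maxexpK u.
Let E := expR (u ord_max).

Let K_gt0 : (0 < K)%N := ltnW K_gt1.

Lemma maxexpK_ge (i : 'I_K.+1) : (i < K)%N -> expR (u i) <= M.
Proof. exact: le_bigmax_cond. Qed.

Lemma maxexpK_attained : exists2 j : 'I_K.+1, (j < K)%N & M = expR (u j).
Proof.
have i0K : ((inord 0 : 'I_K.+1) < K)%N by rewrite inordK.
have [j jK Mj] := @eq_bigmax _ _ _ 0 _ (fun i : 'I_K.+1 => (i < K)%N)
  (fun i => expR (u i)) i0K (fun i _ => expR_ge0 (u i)).
by exists j.
Qed.

Lemma maxexpK_lt_sum : M < S.
Proof.
have [j jK ->] := maxexpK_attained.
have [k kK neq_kj] := exists_other_ord j K_gt1.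
by apply: ltr_sum_term neq_kj (expR_gt0 _) => // i _; exact: expR_ge0.
Qed.

Let M_lt_S := maxexpK_lt_sum.
Let E_ge0 : 0 <= E := expR_ge0 _.

Let S_gt0 : 0 < S.
Proof.
have [j _ Mj] := maxexpK_attained.
by rewrite (lt_trans _ M_lt_S) // Mj expR_gt0.
Qed.

Lemma asym_softmaxE y : asym_softmax u y =
  if (y < K)%N then expR (u y) / S else expR (u y) / (S + E - M).
Proof. by rewrite /asym_softmax sumr_ord_max. Qed.

Lemma asym_softmax_ord_max : asym_softmax u ord_max = E / (S + E - M).
Proof. by rewrite asym_softmaxE ltnn. Qed.

Lemma asym_softmax_in_simplex_x_unit : in_simplex_x_unit (asym_softmax u).
Proof.
split; [|split].
- by move=> y yK; rewrite asym_softmaxE yK divr_ge0 ?expR_ge0 ?ltW.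
- rewrite (eq_bigr (fun y => expR (u y) / S)); last first.
    by move=> y yK; rewrite asym_softmaxE yK.
  by rewrite -mulr_suml divff // gt_eqF.
- rewrite asym_softmax_ord_max; split.
    exact: shifted_ratio_ge0 E_ge0 M_lt_S.
  exact: shifted_ratio_le1 E_ge0 M_lt_S.
Qed.

Lemma argmax_set_asym_softmax : argmax_set (asym_softmax u) = argmax_set u.
Proof.
have [j jK Mj] := maxexpK_attained.
have init_div (y : 'I_K.+1) : (y < K)%N -> asym_softmax u y = expR (u y) / S.
  by move=> yK; rewrite asym_softmaxE yK.
apply: (eq_argmax_set_last jK).
- by move=> z zK; rewrite !init_div // ler_pM2r ?invr_gt0 // -Mj maxexpK_ge.
- by move=> y z yK zK; rewrite !init_div // ler_pM2r ?invr_gt0 // ler_expR.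
- rewrite asym_softmax_ord_max init_div // -Mj.
  by rewrite (ler_shifted_ratio E_ge0 S_gt0 M_lt_S) Mj /E ler_expR.
- rewrite asym_softmax_ord_max init_div // -Mj.
  by rewrite (ger_shifted_ratio E_ge0 S_gt0 M_lt_S) Mj /E ler_expR.
Qed.

End AsymSoftmax.

Theorem proposition1 (R : realType) (K : nat) (hK : (1 < K)%N)
  (u : 'I_K.+1 -> R) :
  in_simplex_x_unit (asym_softmax u) /\
  argmax_set (asym_softmax u) = argmax_set u.
Proof.
split; [exact: asym_softmax_in_simplex_x_unit | exact: argmax_set_asym_softmax].
Qed.
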